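(* Let $K$ be a field, $I\subset R=K[x_1,\ldots,x_n]$ a monomial ideal and $h$ a monomial in $R$. Then $I$ has the copersistence property if and only if $hI$ has the copersistence property.
   Context: An ideal $I$ in a commutative Noetherian ring $R$ has the copersistence property if $\mathrm{Ass}_R(R/I^k)\supseteq\mathrm{Ass}_R(R/I^{k+1})$ for all $k\ge1$. *)

From HB Require Import structures.
From mathcomp Require Import all_boot all_order all_algebra.
From mathcomp Require Import mpoly.
Set Implicit Arguments. Unset Strict Implicit. Unset Printing Implicit Defensive.
Import GRing.Theory.
Local Open Scope ring_scope.

Section Ideals.
Variables (n : nat) (K : fieldType).
Local Notation R := {mpoly K[n]}.

Definition is_ideal (I : R -> Prop) : Prop :=
  [/\ I 0, (forall f g, I f -> I g -> I (f + g)) & (forall a f, I f -> I (a * f))].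

Definition ideal_gen (S : R -> Prop) : R -> Prop :=
  fun f => exists s : seq (R * R),
    (forall p, p \in s -> S p.2) /\ f = \sum_(p <- s) p.1 * p.2.

Definition is_prime_ideal (P : R -> Prop) : Prop :=
  [/\ is_ideal P, ~ P 1 & (forall a b, P (a * b) -> P a \/ P b)].

Definition is_monomial (h : R) : Prop := exists m : 'X_{1..n}, h = 'X_[m].

Definition is_monomial_ideal (I : R -> Prop) : Prop :=
  exists S : R -> Prop, (forall f, S f -> is_monomial f) /\
    (forall f, I f <-> ideal_gen S f).

Fixpoint ideal_pow (I : R -> Prop) (k : nat) : R -> Prop :=
  match k with
  | 0 => fun _ => True
  | k'.+1 => ideal_gen (fun f => exists a b, ideal_pow I k' a /\ I b /\ f = a * b)
  end.

Definition ideal_mul_elt (h : R) (I : R -> Prop) : R -> Prop :=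
  ideal_gen (fun f => exists g, I g /\ f = h * g).

(* P \in Ass_R(R/J)  iff  P is prime and P = (J : f) = Ann(f + J) for some f *)
Definition Ass (J : R -> Prop) (P : R -> Prop) : Prop :=
  is_prime_ideal P /\ exists f : R, forall g, P g <-> J (g * f).

Definition copersistent (I : R -> Prop) : Prop :=
  forall k, (1 <= k)%N ->
    forall P, Ass (ideal_pow I k.+1) P -> Ass (ideal_pow I k) P.

End Ideals.

From mathcomp Require Import all_boot all_order all_algebra.
From mathcomp Require Import mpoly.
From mathcomp Require Import ring zify.
From Stdlib Require Import FunctionalExtensionality PropExtensionality Classical Wf_nat.
Set Implicit Arguments. Unset Strict Implicit. Unset Printing Implicit Defensive.
Import GRing.Theory.
Local Open Scope ring_scope.

(* For a monomial ideal I and a monomial X^m we have (X^m I)^k = X^(k m) I^k.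
   Multiplying an ideal by a nonzero element can only enlarge its set of
   associated primes, and conversely a prime associated to X^m J is associated
   to J or is one of the primes (x_i) with x_i | X^m.  Both directions of the
   equivalence thus reduce to deciding when (x_i) is associated to a power, and
   (x_i) is associated to every nonzero monomial ideal L contained in (x_i):
   it is the colon of L by X^(u - e_i), where X^u is a monomial of L of least
   degree in x_i. *)

Section MonomialIdeals.
Variables (n : nat) (K : fieldType).
Local Notation R := {mpoly K[n]}.
Implicit Types (S J A B P : R -> Prop) (a b c f g p q : R) (m t w : 'X_{1..n}).

Lemma prop_set_ext A B : (forall g, A g <-> B g) -> A = B.
Proof.
move=> AB; apply: functional_extensionality => g.
exact: propositional_extensionality.
Qed.

Lemma ideal_gen_ideal S : is_ideal (ideal_gen S).
Proof.
split.
- by exists [::]; rewrite big_nil.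
- move=> f g [s [Ss ->]] [t [St ->]]; exists (s ++ t); rewrite big_cat; split=> //.
  by move=> p; rewrite mem_cat => /orP[]; [apply: Ss | apply: St].
- move=> a f [s [Ss ->]]; exists [seq (a * x.1, x.2) | x <- s]; split.
    by move=> x /mapP[y sy ->]; apply: Ss sy.
  by rewrite big_map mulr_sumr; apply: eq_bigr => x _; rewrite mulrA.
Qed.

Lemma subset_ideal_gen S f : S f -> ideal_gen S f.
Proof.
move=> Sf; exists [:: (1, f)]; rewrite big_seq1 mul1r; split=> //.
by move=> p; rewrite inE => /eqP ->.
Qed.

Lemma ideal_gen_min S J : is_ideal J -> (forall f, S f -> J f) ->
  forall f, ideal_gen S f -> J f.
Proof.
move=> [J0 JD JM] SJ f [s [Ss ->]]; elim: s Ss => [|p s IHs] Ss.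
  by rewrite big_nil.
rewrite big_cons; apply: JD; first by apply/JM/SJ/Ss; rewrite mem_head.
by apply: IHs => q sq; apply: Ss; rewrite inE sq orbT.
Qed.

Lemma ideal_gen_id J : is_ideal J -> ideal_gen J = J.
Proof.
move=> idJ; apply: prop_set_ext => g; split; last exact: subset_ideal_gen.
exact: ideal_gen_min.
Qed.

Lemma colon_ideal J b : is_ideal J -> is_ideal (fun a => J (b * a)).
Proof.
move=> [J0 JD JM]; split; first by rewrite mulr0.
- by move=> f g Jf Jg; rewrite mulrDr; apply: JD.
- by move=> a f Jf; rewrite mulrCA; apply: JM.
Qed.

Lemma ideal_pow_ideal J k : is_ideal (ideal_pow J k).
Proof. by case: k => [|k]; [split | exact: ideal_gen_ideal]. Qed.

Lemma ideal_powS_sub J k g : ideal_pow J k.+1 g -> ideal_pow J k g.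
Proof.
have [_ _ powM] := ideal_pow_ideal J k.
apply: ideal_gen_min; first exact: ideal_pow_ideal.
by move=> _ [a [b [Ja [_ ->]]]]; rewrite mulrC; apply: powM.
Qed.

Lemma ideal_pow_sub J k g : is_ideal J -> (0 < k)%N -> ideal_pow J k g -> J g.
Proof.
move=> [J0 JD JM]; elim: k g => [|[|k] IHk] g // _.
  by apply: ideal_gen_min => // _ [a [b [_ [Jb ->]]]]; apply: JM.
by move/ideal_powS_sub; apply: IHk.
Qed.

Definition prod_set A B : R -> Prop := fun f => exists a b, A a /\ B b /\ f = a * b.

Fixpoint pow_set S k : R -> Prop :=
  if k is k'.+1 then prod_set (pow_set S k') S else fun f => f = 1.

Definition mul_set c J : R -> Prop := fun f => exists j, J j /\ f = c * j.

Lemma ideal_powS J k : ideal_pow J k.+1 = ideal_gen (prod_set (ideal_pow J k) J).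
Proof. by []. Qed.

Lemma ideal_gen_prod A B :
  ideal_gen (prod_set (ideal_gen A) (ideal_gen B)) = ideal_gen (prod_set A B).
Proof.
have idG := ideal_gen_ideal (prod_set A B).
apply: prop_set_ext => g; split; apply: ideal_gen_min; try exact: ideal_gen_ideal.
  move=> _ [a [b [Aa [Bb ->]]]]; move: b Bb; apply: ideal_gen_min; first exact: colon_ideal.
  move=> b Bb; rewrite mulrC; move: a Aa; apply: ideal_gen_min; first exact: colon_ideal.
  by move=> a Aa; apply: subset_ideal_gen; exists a, b; rewrite mulrC.
move=> _ [a [b [Aa [Bb ->]]]]; apply: subset_ideal_gen.
by exists a, b; do !split; apply: subset_ideal_gen.
Qed.

Lemma ideal_pow_gen S k : ideal_pow (ideal_gen S) k = ideal_gen (pow_set S k).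
Proof.
elim: k => [|k IHk]; last by rewrite ideal_powS IHk ideal_gen_prod.
have [_ _ genM] := ideal_gen_ideal (pow_set S 0).
apply: prop_set_ext => g; split=> // _; rewrite -[g]mulr1.
exact/genM/subset_ideal_gen.
Qed.

Lemma mul_set_ideal c J : is_ideal J -> is_ideal (mul_set c J).
Proof.
move=> [J0 JD JM]; split; first by exists 0; rewrite mulr0.
- move=> _ _ [f [Jf ->]] [g [Jg ->]].
  by exists (f + g); rewrite mulrDr; split=> //; apply: JD.
- by move=> a _ [f [Jf ->]]; exists (a * f); rewrite mulrCA; split=> //; apply: JM.
Qed.

Lemma ideal_gen_mul_set c S : ideal_gen (mul_set c S) = mul_set c (ideal_gen S).
Proof.
have idG := ideal_gen_ideal (mul_set c S).
apply: prop_set_ext => g; split.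
  apply: ideal_gen_min; first exact/mul_set_ideal/ideal_gen_ideal.
  by move=> _ [f [Sf ->]]; exists f; split=> //; exact: subset_ideal_gen.
move=> [f [Sf ->]]; move: f Sf; apply: ideal_gen_min; first exact: colon_ideal.
by move=> f Sf; apply: subset_ideal_gen; exists f.
Qed.

Lemma prod_set_mul c d A B :
  prod_set (mul_set c A) (mul_set d B) = mul_set (c * d) (prod_set A B).
Proof.
apply: prop_set_ext => g; split.
  move=> [_ [_ [[a [Aa ->]] [[b [Bb ->]] ->]]]].
  by exists (a * b); rewrite mulrACA; split=> //; exists a, b.
move=> [_ [[a [b [Aa [Bb ->]]]] ->]]; exists (c * a), (d * b); rewrite mulrACA.
by split; [exists a | split=> //; exists b].
Qed.

Lemma ideal_pow_mul_set c J k :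
  ideal_pow (mul_set c J) k = mul_set (c ^+ k) (ideal_pow J k).
Proof.
elim: k => [|k IHk].
  by apply: prop_set_ext => g; split=> // _; exists g; rewrite expr0 mul1r.
by rewrite ideal_powS IHk prod_set_mul -exprSr ideal_gen_mul_set.
Qed.

Lemma ideal_pow_mul_elt c J k : is_ideal J ->
  ideal_pow (ideal_mul_elt c J) k = mul_set (c ^+ k) (ideal_pow J k).
Proof. by move=> idJ; rewrite -ideal_pow_mul_set -(ideal_gen_id (mul_set_ideal c idJ)). Qed.

Lemma prime_ideal_pow_sub J P k : is_ideal J -> is_prime_ideal P -> (0 < k)%N ->
  (forall g, ideal_pow J k.+1 g -> P g) -> forall g, ideal_pow J k g -> P g.
Proof.
move=> idJ [_ _ Pmul] k0 PJ g Jkg.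
have : P (g * g).
  by apply/PJ/subset_ideal_gen; exists g, g; do !split=> //; exact: ideal_pow_sub Jkg.
by case/Pmul.
Qed.

Lemma prime_ideal_prod (T : eqType) P (r : seq T) (F : T -> R) :
  is_prime_ideal P -> P (\prod_(x <- r) F x) -> exists2 x, x \in r & P (F x).
Proof.
move=> [_ P1 Pmul]; elim: r => [|x r IHr]; first by rewrite big_nil => /P1.
rewrite big_cons => /Pmul[PFx | /IHr[y ry PFy]]; first by exists x; rewrite ?mem_head.
by exists y; rewrite // inE ry orbT.
Qed.

Lemma prime_ideal_expr P a k : is_prime_ideal P -> P (a ^+ k) -> P a /\ (0 < k)%N.
Proof.
move=> [_ P1 Pmul]; elim: k => [|k IHk]; first by rewrite expr0 => /P1.
by rewrite exprS => /Pmul[Pa | /IHk[Pa _]].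
Qed.

Lemma prime_ideal_monomial P m : is_prime_ideal P -> P 'X_[m] ->
  exists2 i, (0 < m i)%N & P 'X_i.
Proof.
move=> Pprime; rewrite mpolyXE_id => /(prime_ideal_prod Pprime)[i _].
by case/(prime_ideal_expr Pprime) => Pxi mi; exists i.
Qed.

Lemma Ass_sub J P : is_ideal J -> Ass J P -> forall g, J g -> P g.
Proof. by move=> [_ _ JM] [_ [f Pf]] g Jg; apply/Pf; rewrite mulrC; apply: JM. Qed.

Lemma Ass_nonzero J P a : Ass J P -> P a -> a != 0 -> exists2 g, J g & g != 0.
Proof.
move=> [[[P0 _ _] P1 _] [f Pf]] Pa a0; exists (a * f); first exact/Pf.
rewrite mulf_neq0 //; apply/eqP => f0; apply/P1/Pf.
by move/Pf: P0; rewrite f0 !mulr0.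
Qed.

Lemma Ass_mul_set c J P : c != 0 -> Ass J P -> Ass (mul_set c J) P.
Proof.
move=> c0 [Pprime [f Pf]]; split=> //; exists (c * f) => g; rewrite Pf; split.
  by move=> Jgf; exists (g * f); rewrite mulrCA.
by move=> [j [Jj gcfE]]; rewrite (mulfI c0 (_ : c * (g * f) = c * j)) // mulrCA.
Qed.

Lemma mpolyX_neq0 m : 'X_[m] != 0 :> R.
Proof. by rewrite -msupp_eq0 msuppX. Qed.

Lemma mpolyX_dvdP t g :
  (exists q, g = 'X_[t] * q) <-> {in msupp g, forall w, (t <= w)%MM}.
Proof.
split=> [[q ->] w | tg].
  by rewrite mulrC (perm_mem (msuppMX q t)) => /mapP[v _ ->]; exact: lem_addr.
exists (\sum_(w <- msupp g) g@_w *: 'X_[w - t]).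
rewrite mulr_sumr {1}(mpolyE g); apply: eq_big_seq => w gw.
by rewrite -scalerAr -mpolyXD addmC submK ?tg.
Qed.

Definition xdvd i d p := {in msupp p, forall w, (d <= w i)%N}.

Lemma xdvd0 i d : xdvd i d 0.
Proof. by move=> w; rewrite mcoeff_msupp mcoeff0 eqxx. Qed.

Lemma xdvd_le i d e p : (d <= e)%N -> xdvd i e p -> xdvd i d p.
Proof. by move=> de pe w /pe; apply: leq_trans. Qed.

Lemma xdvdD i d p q : xdvd i d p -> xdvd i d q -> xdvd i d (p + q).
Proof. by move=> pd qd w /msuppD_le; rewrite mem_cat => /orP[/pd | /qd]. Qed.

Lemma xdvdN i d p : xdvd i d p -> xdvd i d (- p).
Proof. by move=> pd w; rewrite (perm_mem (msuppN p)) => /pd. Qed.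

Lemma xdvdM i d e p q : xdvd i d p -> xdvd i e q -> xdvd i (d + e) (p * q).
Proof.
move=> pd qe w /msuppM_le/allpairsP[[u v] /= [/pd ud /qe ve ->]].
by rewrite mnmDE leq_add.
Qed.

Lemma xdvd1P i g : xdvd i 1 g <-> exists q, g = 'X_i * q.
Proof. by rewrite mpolyX_dvdP; split=> tg w /tg; rewrite lep1mP lt0n. Qed.

Lemma xdvd1_X i : xdvd i 1 'X_i.
Proof. by apply/xdvd1P; exists 1; rewrite mulr1. Qed.

Lemma xdvd_exact i p : p != 0 -> exists d, xdvd i d p /\ ~ xdvd i d.+1 p.
Proof.
move=> p0; have ex : exists d, has (fun w => w i == d) (msupp p).
  by exists (mlead p i); apply/hasP; exists (mlead p); rewrite ?mlead_supp.
case: (ex_minnP ex) => d /hasP[w pw /eqP wd] dmin; exists d; split.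
  by move=> v pv; apply/dmin/hasP; exists v.
by move/(_ w pw); rewrite wd ltnn.
Qed.

Lemma xdvd_split i d p : xdvd i d p -> ~ xdvd i d.+1 p ->
  exists p0 p1, [/\ p = p0 + p1, p0 != 0, {in msupp p0, forall w, w i = d}
                  & xdvd i d.+1 p1].
Proof.
move=> pd pd1; pose pt (Q : pred 'X_{1..n}) := \sum_(w <- msupp p | Q w) p@_w *: 'X_[w].
have ptP (Q : pred 'X_{1..n}) : {in msupp (pt Q), forall w, Q w && (w \in msupp p)}.
  move=> w /msupp_sum_le/flatten_mapP[v]; rewrite mem_filter => /andP[Qv pv].
  by move/msuppZ_le; rewrite msuppX mem_seq1 => /eqP ->; rewrite Qv.
have pE : p = pt (fun w => w i == d) + pt (fun w => w i != d).
  by rewrite {1}(mpolyE p) (bigID (fun w => w i == d)).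
have p1d : xdvd i d.+1 (pt (fun w => w i != d)).
  by move=> w /ptP/andP[wd /pd]; rewrite leq_eqVlt eq_sym (negbTE wd).
exists (pt (fun w => w i == d)), (pt (fun w => w i != d)); split=> //.
  by apply/eqP => p00; apply: pd1; rewrite pE p00 add0r.
by move=> w /ptP/andP[/eqP].
Qed.

Lemma xdvdM_exact i d e p q :
  xdvd i d p -> ~ xdvd i d.+1 p -> xdvd i e q -> ~ xdvd i e.+1 q ->
  ~ xdvd i (d + e).+1 (p * q).
Proof.
move=> pd pd1 qe qe1 pqd.
have [p0 [p1 [pE p00 p0d p1d]]] := xdvd_split pd pd1.
have [q0 [q1 [qE q00 q0e q1e]]] := xdvd_split qe qe1.
have p0d' : xdvd i d p0 by move=> w /p0d ->.
have p0q0 : xdvd i (d + e).+1 (p0 * q0).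
  have -> : p0 * q0 = p * q - (p0 * q1 + p1 * q) by rewrite pE qE; ring.
  apply/xdvdD/xdvdN => //; apply: xdvdD; first by rewrite -addnS; apply: xdvdM.
  by rewrite -addSn; apply: xdvdM.
have /mlead_supp pq_lead := mulf_neq0 p00 q00.
move: (p0q0 _ pq_lead); case/msuppM_le/allpairsP: pq_lead => [[u v] /= [/p0d ud /q0e ve ->]].
by rewrite mnmDE ud ve ltnn.
Qed.

Lemma xdvd_mul_cancel i d g f : ~ xdvd i 1 g -> xdvd i d (g * f) -> xdvd i d f.
Proof.
move=> g1 gfd; have [->|f0] := eqVneq f 0; first exact: xdvd0.
have [e [fe fe1]] := xdvd_exact i f0.
have [de | ed] := leqP d e; first exact: xdvd_le fe.
by case: (@xdvdM_exact i 0 e g f) => //; apply: xdvd_le gfd.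
Qed.

Lemma xdvd1_prime i : is_prime_ideal (xdvd i 1).
Proof.
split.
- split; [exact: xdvd0 | by move=> f g; apply: xdvdD | by move=> a f; apply: (@xdvdM _ 0)].
- by move/(_ 0%MM); rewrite mcoeff_msupp mcoeff1 eqxx oner_eq0 mnm0E => /(_ isT).
- move=> a b abd; have [|a1] := classic (xdvd i 1 a); [by left | right].
  exact: xdvd_mul_cancel abd.
Qed.

Lemma mpolyX_dvd_cancel m i g f : ~ xdvd i 1 g ->
  (exists q, g * f = 'X_[m] * q) -> (exists q, 'X_i * f = 'X_[m] * q) ->
  exists q, f = 'X_[m] * q.
Proof.
move=> g1 /mpolyX_dvdP mgf /mpolyX_dvdP mxf; apply/mpolyX_dvdP => w fw.
have fmi : xdvd i (m i) f by apply: (xdvd_mul_cancel g1) => v /mgf/mnm_lepP.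
apply/mnm_lepP => j; have [<- | ij] := eqVneq i j; first exact: fmi.
have /mxf/mnm_lepP/(_ j) : (U_(i) + w)%MM \in msupp ('X_i * f).
  by rewrite mulrC (perm_mem (msuppMX f _)); apply: map_f.
by rewrite mnmDE mnm1E (negbTE ij).
Qed.

Lemma Ass_mul_monomial m J P : Ass (mul_set 'X_[m] J) P ->
  Ass J P \/ exists2 i, (0 < m i)%N & P = xdvd i 1.
Proof.
move=> [Pprime [f Pf]]; have [[_ _ PM] P1 Pmul] := Pprime.
have [[a Pa [q afE]] | notPa] :=
  classic (exists2 a, ~ P a & exists q, a * f = 'X_[m] * q).
  left; split=> //; exists q => g; split=> [Pg | Jgq].
    have /Pf[j [Jj agfE]] : P (a * g) by apply: PM.
    suff -> : g * q = j by [].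
    by apply: (mulfI (mpolyX_neq0 m)); rewrite -agfE mulrCA -afE mulrCA mulrA.
  have : P (g * a) by apply/Pf; exists (g * q); rewrite -mulrA afE mulrCA.
  by case/Pmul.
have divP a : (exists q, a * f = 'X_[m] * q) -> P a.
  by move=> afm; apply: NNPP => Pa; apply: notPa; exists a.
have [i mi Pxi] := prime_ideal_monomial Pprime (divP _ (ex_intro _ f erefl)).
right; exists i => //; apply: prop_set_ext => g.
split=> [Pg | /xdvd1P[q ->]]; last by rewrite mulrC; apply: PM.
apply: NNPP => g1; apply/P1/divP; rewrite mul1r.
apply: (mpolyX_dvd_cancel g1).
  by have /Pf[j [_ ->]] := Pg; exists j.
by have /Pf[j [_ ->]] := Pxi; exists j.
Qed.

Definition monomial_set S := forall f, S f -> is_monomial f.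

Lemma monomial_idealE J : is_monomial_ideal J ->
  exists2 S, monomial_set S & J = ideal_gen S.
Proof. by move=> [S [Smon JS]]; exists S => //; apply: prop_set_ext. Qed.

Lemma monomial_ideal_ideal J : is_monomial_ideal J -> is_ideal J.
Proof. by case/monomial_idealE => S _ ->; apply: ideal_gen_ideal. Qed.

Lemma monomial_ideal_gen S : monomial_set S -> is_monomial_ideal (ideal_gen S).
Proof. by move=> Smon; exists S. Qed.

Lemma monomial_ideal_pow J k : is_monomial_ideal J -> is_monomial_ideal (ideal_pow J k).
Proof.
case/monomial_idealE => S Smon ->; rewrite ideal_pow_gen; apply: monomial_ideal_gen.
elim: k => [|k IHk] f /=; first by move=> ->; exists 0%MM; rewrite mpolyX0.
move=> [_ [_ [/IHk[u ->] [/Smon[v ->] ->]]]].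
by exists (u + v)%MM; rewrite mpolyXD.
Qed.

Lemma monomial_ideal_mul t J : is_monomial_ideal J -> is_monomial_ideal (mul_set 'X_[t] J).
Proof.
case/monomial_idealE => S Smon ->; rewrite -ideal_gen_mul_set; apply: monomial_ideal_gen.
by move=> _ [_ [/Smon[u ->] ->]]; exists (t + u)%MM; rewrite mpolyXD.
Qed.

Lemma monomial_ideal_supp J g : is_monomial_ideal J -> J g ->
  {in msupp g, forall w, exists2 t, J 'X_[t] & (t <= w)%MM}.
Proof.
case/monomial_idealE => S Smon ->; move: g; apply: ideal_gen_min.
  split; first by move=> w; rewrite mcoeff_msupp mcoeff0 eqxx.
  - by move=> f g fS gS w /msuppD_le; rewrite mem_cat => /orP[/fS | /gS].
  - move=> a f fS w /msuppM_le/allpairsP[[u v] /= [_ /fS[t St tv] ->]].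
    by exists t => //; apply: lepm_trans (lem_addl u v).
move=> _ /[dup] /Smon[t ->] St w; rewrite msuppX mem_seq1 => /eqP ->.
by exists t; [apply: subset_ideal_gen | apply: lepm_refl].
Qed.

Lemma Ass_xdvd1 J i : is_monomial_ideal J ->
  (exists2 g, J g & g != 0) -> (forall g, J g -> xdvd i 1 g) -> Ass J (xdvd i 1).
Proof.
move=> Jmon [g Jg g0] Jxi; have [_ _ JM] := monomial_ideal_ideal Jmon.
have [t Jt _] := monomial_ideal_supp Jmon Jg (mlead_supp g0).
pose Q d := exists2 u, J 'X_[u] & u i = d.
have [d [[[u Ju ui] dmin] _]] :=
  dec_inh_nat_subset_has_unique_least_element Q (fun d => classic (Q d))
    (ex_intro Q _ (ex_intro2 _ _ t Jt erefl)).
have ui0 : (0 < u i)%N by apply: (Jxi _ Ju); rewrite msuppX mem_head.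
have Uu : (U_(i) <= u)%MM by rewrite lep1mP -lt0n.
split; first exact: xdvd1_prime.
exists 'X_[u - U_(i)] => f; split.
  by case/xdvd1P => q ->; rewrite mulrAC -mpolyXD addmC submK // mulrC; apply: JM.
move=> Jfx w fw; rewrite lt0n; apply/negP => /eqP wi0.
have uw : (u - U_(i) + w)%MM \in msupp (f * 'X_[u - U_(i)]).
  by rewrite (perm_mem (msuppMX _ _)); apply: map_f.
have [v Jv vuw] := monomial_ideal_supp Jmon Jfx uw.
have Juw : J 'X_[u - U_(i) + w].
  by rewrite -(submK vuw) mpolyXD; apply: JM.
move/leP: (dmin _ (ex_intro2 _ _ _ Juw erefl)).
by rewrite mnmDE mnmBE mnm1E eqxx wi0 addn0; lia.
Qed.

Section Copersistence.
Variables (I : R -> Prop) (m : 'X_{1..n}).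
Hypothesis Imon : is_monomial_ideal I.

Let ideal_powX k : ideal_pow (ideal_mul_elt 'X_[m] I) k = mul_set 'X_[m *+ k] (ideal_pow I k).
Proof. by rewrite ideal_pow_mul_elt ?mpolyXn //; apply: monomial_ideal_ideal. Qed.

Lemma copersistent_mulX : copersistent I -> copersistent (ideal_mul_elt 'X_[m] I).
Proof.
move=> Icop k k1 P; rewrite !ideal_powX => PA.
have [PI | [i mi PE]] := Ass_mul_monomial PA.
  exact: Ass_mul_set (mpolyX_neq0 _) (Icop _ k1 _ PI).
subst P.
have [_ [j [Ij ->]] Xj0] := Ass_nonzero PA (@xdvd1_X i) (mpolyX_neq0 _).
apply: Ass_xdvd1; first exact/monomial_ideal_mul/monomial_ideal_pow.
  exists ('X_[m *+ k] * j); first by exists j; split=> //; apply: ideal_powS_sub.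
  by rewrite mulf_neq0 ?mpolyX_neq0 //; apply: contraNneq Xj0 => ->; rewrite mulr0.
move=> _ [g [_ ->]]; apply: (@xdvdM _ 1 0) => // w; rewrite msuppX mem_seq1 => /eqP ->.
by move: mi; rewrite !mulmnE !muln_gt0 => /andP[-> _].
Qed.

Lemma copersistent_of_mulX : copersistent (ideal_mul_elt 'X_[m] I) -> copersistent I.
Proof.
move=> hIcop k k1 P PA.
have := hIcop k k1 P; rewrite !ideal_powX => /(_ (Ass_mul_set (mpolyX_neq0 _) PA)).
case/Ass_mul_monomial => [// | [i _ PE]]; subst P.
have [j Ij j0] := Ass_nonzero PA (@xdvd1_X i) (mpolyX_neq0 _).
apply: Ass_xdvd1; first exact: monomial_ideal_pow.
  by exists j => //; apply: ideal_powS_sub.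
apply: (prime_ideal_pow_sub (monomial_ideal_ideal Imon) (@xdvd1_prime i) k1).
exact: Ass_sub (ideal_pow_ideal _ _) PA.
Qed.

End Copersistence.
End MonomialIdeals.

Theorem proposition3p7 (K : fieldType) (n : nat) (I : {mpoly K[n]} -> Prop)
  (h : {mpoly K[n]}) :
  is_monomial_ideal I -> is_monomial h ->
  (copersistent I <-> copersistent (ideal_mul_elt h I)).
Proof.
move=> Imon [m ->]; split; [exact: copersistent_mulX | exact: copersistent_of_mulX].
Qed.
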